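(* Let $X$ be a nonempty finite $T_0$-space and $I$ the identity matrix of order $|X|$. Then (1) $X$ is a totally ordered set if and only if $\det(X_M+I)=1$; and (2) $\det(X_M+I)=0$ if and only if $X$ is not a totally ordered set.
   Context: A finite $T_0$-space is identified with a finite poset via $x\le y$ iff $U_x\subseteq U_y$, where $U_x$ is the minimal open set containing $x$. For a labelling $X=\{x_1,\dots,x_n\}$, $X_M=(x_{i,j})$ is the $n\times n$ matrix with $x_{i,j}=0$ if $x_i\le x_j$ and $x_{i,j}=1$ otherwise. *)

From mathcomp Require Import all_boot all_order all_algebra.
Set Implicit Arguments. Unset Strict Implicit. Unset Printing Implicit Defensive.
Import GRing.Theory.

(* A topology on a finite type T, given by its family of open sets.
   Since T is finite, closure under binary unions/intersections suffices. *)
Definition is_topology (T : finType) (opens : {set {set T}}) : Prop :=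
  [/\ set0 \in opens, setT \in opens,
      (forall U V, U \in opens -> V \in opens -> U :|: V \in opens) &
      (forall U V, U \in opens -> V \in opens -> U :&: V \in opens)].

Definition is_T0 (T : finType) (opens : {set {set T}}) : Prop :=
  forall x y : T, x != y -> exists2 U, U \in opens & (x \in U) != (y \in U).

Definition minopen (T : finType) (opens : {set {set T}}) (x : T) : {set T} :=
  \bigcap_(U in opens | x \in U) U.

Definition top_le (T : finType) (opens : {set {set T}}) (x y : T) : bool :=
  minopen opens x \subset minopen opens y.

Definition top_total (T : finType) (opens : {set {set T}}) : Prop :=
  forall x y : T, top_le opens x y || top_le opens y x.

Definition XM (T : finType) (opens : {set {set T}}) (n : nat) (f : 'I_n -> T)
  : 'M[int]_n :=
  \matrix_(i, j) ((if top_le opens (f i) (f j) then 0%R else 1%R) : int).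

From mathcomp Require Import all_boot all_order all_algebra all_fingroup.
Set Implicit Arguments. Unset Strict Implicit. Unset Printing Implicit Defensive.
Import GRing.Theory.
Local Open Scope ring_scope.

(* For a finite poset, [X_M + I] has entry [(i, j)] equal to [0] exactly when
   [x_i < x_j].  If the order is total, every non-identity permutation [s] has
   some [x < s x] (a permutation weakly decreasing everywhere is the identity),
   so only the diagonal term survives and the determinant is [1].  If it is
   not total, an incomparable pair minimising the sizes of their strict upper
   sets has equal strict upper sets; the corresponding two rows of [X_M + I]
   coincide, so the determinant is [0]. *)

Section SpecialisationOrder.

Variables (T : finType) (opens : {set {set T}}).

Lemma mem_minopen x : x \in minopen opens x.
Proof. by apply/bigcapP => U /andP[]. Qed.

Lemma top_le_refl : reflexive (top_le opens).
Proof. by move=> x; apply: subxx. Qed.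

Lemma top_le_trans : transitive (top_le opens).
Proof. by move=> y x z; apply: subset_trans. Qed.

Lemma top_le_anti : is_T0 opens -> antisymmetric (top_le opens).
Proof.
move=> T0 x y /andP[le_xy le_yx]; case: (eqVneq x y) => // /T0[U openU].
have below_mem z t : top_le opens z t -> t \in U -> z \in U.
  move=> le_zt tU; have : minopen opens t \subset U by apply: bigcap_inf; rewrite openU.
  by move/subsetP; apply; apply: (subsetP le_zt); apply: mem_minopen.
suff -> : (x \in U) = (y \in U) by rewrite eqxx.
by apply/idP/idP; apply: below_mem.
Qed.

End SpecialisationOrder.

Lemma totalP (T : finType) (r : rel T) :
  reflect (total r) [forall x, forall y, r x y || r y x].
Proof.
by apply: (iffP forallP) => tot x; [apply/forallP: (tot x) | apply/forallP => y].
Qed.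

Section FinitePoset.

Variables (T : finType) (r : rel T).
Hypotheses (r_refl : reflexive r) (r_trans : transitive r)
           (r_anti : antisymmetric r).

Definition strict_up x := [set y | (y != x) && r x y].

Lemma strict_up_proper a w : w \in strict_up a -> strict_up w \proper strict_up a.
Proof.
rewrite inE => /andP[neq_wa le_aw]; apply/properP; split.
  apply/subsetP => y; rewrite !inE => /andP[neq_yw le_wy].
  rewrite (r_trans le_aw le_wy) andbT; apply: contra neq_yw => /eqP eq_ya.
  by rewrite eq_ya; apply/eqP/r_anti; rewrite le_aw -eq_ya le_wy.
by exists w; rewrite !inE ?eqxx // neq_wa le_aw.
Qed.

Lemma incomparable_strict_up a b w :
  ~~ r a b -> w \in strict_up a -> w \notin strict_up b -> ~~ r w b && ~~ r b w.
Proof.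
move=> nle_ab; rewrite !inE => /andP[_ le_aw] up_bw; apply/andP; split.
  by apply: contra nle_ab; apply: r_trans.
by apply: contra up_bw => le_bw; rewrite le_bw andbT; apply: contra nle_ab => /eqP <-.
Qed.

Lemma incomparable_twins : ~ total r ->
  exists a b, [/\ ~~ r a b, ~~ r b a & strict_up a = strict_up b].
Proof.
move=> /totalP/forallPn[x /forallPn[y]]; rewrite negb_or => incomp_xy.
pose size_up a b := (#|strict_up a| + #|strict_up b|)%N.
have up_sub a b : ~~ r a b ->
    (forall c d, ~~ r c d && ~~ r d c -> size_up a b <= size_up c d)%N ->
    strict_up a \subset strict_up b.
  move=> nle_ab min_ab; apply/subsetP => w up_aw; apply/negPn/negP => up_bw.
  have := min_ab w b (incomparable_strict_up nle_ab up_aw up_bw).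
  by rewrite leq_add2r leqNgt (proper_card (strict_up_proper up_aw)).
have [[a b] /andP[/= nle_ab nle_ba] min_ab] :=
  @arg_minnP _ (x, y) (fun p => ~~ r p.1 p.2 && ~~ r p.2 p.1)
    (fun p => size_up p.1 p.2) incomp_xy.
exists a, b; split=> //; apply/eqP; rewrite eqEsubset.
rewrite up_sub ?(up_sub b a) // => c d incomp_cd.
- by rewrite /size_up addnC; apply: (min_ab (c, d)).
- exact: (min_ab (c, d)).
Qed.

Lemma perm_rel_id (s : {perm T}) : (forall x, r (s x) x) -> s = 1%g.
Proof.
move=> s_le; apply/permP => x; rewrite perm1.
have iter_le k y : r ((s ^+ k)%g y) y.
  elim: k => [|k IH]; first by rewrite expg0 perm1 r_refl.
  by rewrite expgSr permM; apply: r_trans (s_le _) IH.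
apply: r_anti; rewrite s_le /=.
have := iter_le #[s]%g.-1 (s x).
by rewrite -permM -expgS prednK ?order_gt0 // expg_order perm1.
Qed.

End FinitePoset.

Section IncomparabilityDeterminant.

Variables (R : comPzRingType) (n : nat) (r : rel 'I_n).
Hypotheses (r_refl : reflexive r) (r_trans : transitive r)
           (r_anti : antisymmetric r).

Definition notle_mx : 'M[R]_n := \matrix_(i, j) (if r i j then 0 else 1).

Lemma notle_mx1E i j :
  (notle_mx + 1%:M) i j = (if r i j then 0 else 1) + (i == j)%:R.
Proof. by rewrite !mxE. Qed.

Lemma det_notle_mx1_total : total r -> \det (notle_mx + 1%:M) = 1.
Proof.
move=> r_total; rewrite /determinant (bigD1 1%g) //= [X in _ + X]big1 ?addr0.
  rewrite odd_perm1 expr0 mul1r big1 // => i _.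
  by rewrite notle_mx1E perm1 r_refl eqxx add0r.
move=> s s_neq1.
have /existsP[x nle_sx] : [exists x, ~~ r (s x) x].
  apply: contraR s_neq1 => /existsPn nle_s; apply/eqP.
  by apply: perm_rel_id => // x; apply/negPn/nle_s.
have le_xs : r x (s x) by move: (r_total x (s x)); rewrite (negbTE nle_sx) orbF.
have neq_xs : x != s x by apply: contraNneq nle_sx => <-; apply: r_refl.
by rewrite (bigD1 x) //= notle_mx1E le_xs (negbTE neq_xs) addr0 mul0r mulr0.
Qed.

Lemma det_notle_mx1_twins a b : ~~ r a b -> ~~ r b a ->
  strict_up r a = strict_up r b -> \det (notle_mx + 1%:M) = 0.
Proof.
move=> nle_ab nle_ba up_ab.
have neq_ab : a != b by apply: contraNneq nle_ab => ->; apply: r_refl.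
apply: (determinant_alternate neq_ab) => k; rewrite !notle_mx1E.
have /setP/(_ k) := up_ab; rewrite !inE.
case: (eqVneq k a) => [-> _ | neq_ka].
  by rewrite r_refl (negbTE nle_ba) eq_sym (negbTE neq_ab) add0r addr0.
case: (eqVneq k b) => [-> _ | _ /= -> //].
by rewrite r_refl (negbTE nle_ab) add0r addr0.
Qed.

Lemma det_notle_mx1 :
  \det (notle_mx + 1%:M) = [forall i, forall j, r i j || r j i]%:R.
Proof.
case: totalP => [r_total | /(incomparable_twins r_trans r_anti)].
  exact: det_notle_mx1_total.
by case=> a [b [nle_ab nle_ba up_ab]]; apply: det_notle_mx1_twins up_ab.
Qed.

End IncomparabilityDeterminant.

Theorem mainTheorem16 (T : finType) (opens : {set {set T}}) (n : nat)
    (f : 'I_n -> T) :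
  is_topology opens -> is_T0 opens -> (0 < #|T|)%N ->
  bijective f ->
  (top_total opens <-> \det (XM opens f + 1%:M) = 1) /\
  (\det (XM opens f + 1%:M) = 0 <-> ~ top_total opens).
Proof.
move=> _ T0 _ [g fK gK].
pose r := [rel i j | top_le opens (f i) (f j)].
have -> : XM opens f = notle_mx _ r by apply/matrixP => i j; rewrite !mxE.
have r_anti : antisymmetric r.
  by move=> i j le_ij; apply: (can_inj fK); apply: top_le_anti le_ij.
have r_refl : reflexive r by move=> i; apply: top_le_refl.
have r_trans : transitive r by move=> j i k; apply: top_le_trans.
have total_r : top_total opens <-> total r.
  by split=> tot x y; [apply: tot | rewrite -[x]gK -[y]gK; apply: tot].
rewrite det_notle_mx1 //; case: totalP => [/total_r tot | ntot].
  by split; split=> // /eqP; rewrite oner_eq0.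
have ntop : ~ top_total opens by move/total_r.
by split; split=> // /eqP; rewrite eq_sym oner_eq0.
Qed.
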